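(* Consider the nonautonomous TASEP with $n$ sites and rate functions $\lambda_0,\dots,\lambda_n$, with associated NRDS $\phi$ on state space $X=\{0,1\}^n$. Suppose that on an interval $I=[t_0,t)$ the $n+1$ Poisson processes have joint $(r,R,m)$-bounded rates with $m=n(n+1)/2$ and $R>r>0$. Then there exists $\delta=\delta(r,R,n)>0$ such that $\mathbb{P}(\Gamma(t,t_0))\ge\delta$, where $\Gamma(t,t_0):=\{\omega\mid\phi(t,t_0,x_1,\omega)=\phi(t,t_0,x_2,\omega)\text{ for all }x_1,x_2\in X\}$.
   Context: Nonautonomous TASEP: $n$ sites; locally integrable rate functions $\lambda_k:\mathbb{R}\to[0,\infty)$, $k=0,\dots,n$, each with $\int_0^t\lambda_k\to\pm\infty$ as $t\to\pm\infty$; to each $k$ an independent non-homogeneous Poisson process on $\mathbb{R}$ with rate $\lambda_k$ (the image of its points under $M_k(t)=\int_0^t\lambda_k$ is a homogeneous rate-1 Poisson process on $\mathbb{R}$). Almost surely all points of all processes are distinct without accumulation; ordering them gives jump times $t_i(\omega)$ increasing in $i\in\mathbb{Z}$ and sites $k_i(\omega)\in\{0,\dots,n\}$. State $x=(s_1,\dots,s_n)\in X=\{0,1\}^n$ ($s_j=1$ iff site $j$ occupied). Single-jump map: $f(x,0)=(1,s_2,\dots,s_n)$; $f(x,n)=(s_1,\dots,s_{n-1},0)$; for $0<k<n$ with $s_k=1,s_{k+1}=0$, $f(x,k)$ sets $s_k=0,s_{k+1}=1$; otherwise $f(x,k)=x$. The NRDS: $\phi(t,t_0,x,\omega)$ is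 obtained from $x$ by applying successively $f(\cdot,k_i(\omega))$ for all $i$ with $t_i(\omega)\in[t_0,t)$ in increasing order of $i$ (and equals $x$ if there is no such $i$). Joint $(r,R,m)$-bounded rates on $[\tau_1,\tau_2)$: there exist $\tau_1=q_0<\dots<q_m=\tau_2$ with $r\le\int_{q_i}^{q_{i+1}}\lambda_k\le R$ for all $i=0,\dots,m-1$, $k=0,\dots,n$. *)

From HB Require Import structures.
From mathcomp Require Import all_boot all_order all_algebra.
From mathcomp Require Import all_classical all_reals all_analysis.
Set Implicit Arguments. Unset Strict Implicit. Unset Printing Implicit Defensive.
Import Order.TTheory GRing.Theory Num.Theory.
Import numFieldNormedType.Exports.
Local Open Scope classical_set_scope.
Local Open Scope ring_scope.

Section TASEP.
Variable R : realType.

Definition rate_int (lam : R -> R) (a b : R) : R :=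
  fine (\int[@lebesgue_measure R]_(x in `[a, b[) (lam x)%:E)%E.

Definition cum_rate (lam : R -> R) (t : R) : R :=
  if 0 <= t then rate_int lam 0 t else - rate_int lam t 0.

Definition admissible_rate (lam : R -> R) : Prop :=
  [/\ forall x, 0 <= lam x,
      forall a b : R, (@lebesgue_measure R).-integrable `[a, b] (EFin \o lam),
      cum_rate lam t @[t --> +oo] --> +oo &
      cum_rate lam t @[t --> -oo] --> -oo].

Definition poisson_mass (mu : R) (j : nat) : R :=
  expR (- mu) * mu ^+ j / (j`!)%:R.

Definition card_is (A : set R) (j : nat) : Prop :=
  exists s : seq R, [/\ uniq s, size s = j & forall x, A x <-> x \in s].

(** Independent non-homogeneous Poisson processes with rates lam k:
    for every finite family of (process index, half-open interval [a,b))
    such that intervals belonging to the same process are pairwise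
    disjoint, and every family of counts, the joint event is measurable
    and its probability is the product of Poisson masses with means
    \int_a^b lam_k. (This fixes all finite-dimensional distributions,
    including mutual independence of the processes.) *)
Definition indep_poisson_processes (n : nat) (lam : 'I_n.+1 -> R -> R)
    (d : measure_display) (Omega : measurableType d)
    (P : probability Omega R) (pts : 'I_n.+1 -> Omega -> set R) : Prop :=
  forall (F : seq ('I_n.+1 * R * R)) (cnt : seq nat),
    size cnt = size F ->
    (forall i, (i < size F)%N -> (nth (ord0, 0, 0) F i).1.2 <= (nth (ord0, 0, 0) F i).2) ->
    (forall i j, (i < size F)%N -> (j < size F)%N -> i <> j ->
       (nth (ord0, 0, 0) F i).1.1 = (nth (ord0, 0, 0) F j).1.1 ->
       `[(nth (ord0, 0, 0) F i).1.2, (nth (ord0, 0, 0) F i).2[ `&`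
       `[(nth (ord0, 0, 0) F j).1.2, (nth (ord0, 0, 0) F j).2[ = set0) ->
    let E := [set w | forall i, (i < size F)%N ->
                 let: (k, a, b) := nth (ord0, 0, 0) F i in
                 card_is (pts k w `&` `[a, b[) (nth 0%N cnt i)] in
    measurable E /\
    P E = (\prod_(i < size F)
             (let: (k, a, b) := nth (ord0, 0, 0) F i in
              poisson_mass (rate_int (lam k) a b) (nth 0%N cnt i)))%:E.

Definition joint_bounded (n : nat) (lam : 'I_n.+1 -> R -> R) (r Rb : R)
    (m : nat) (tau1 tau2 : R) : Prop :=
  exists q : nat -> R,
    [/\ q 0%N = tau1, q m = tau2,
        forall i, (i < m)%N -> q i < q i.+1 &
        forall i (k : 'I_n.+1), (i < m)%N ->
          r <= rate_int (lam k) (q i) (q i.+1) <= Rb].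

(** States: x = (s_1,...,s_n), site j (1 <= j <= n) stored at index j-1. *)
Definition state (n : nat) := {ffun 'I_n -> bool}.

Definition occ (n : nat) (x : state n) (j : nat) : bool :=
  [exists i : 'I_n, (i.+1 == j) && x i].

Definition jump (n : nat) (x : state n) (k : 'I_n.+1) : state n :=
  [ffun i : 'I_n =>
     let j := i.+1 in
     if (k == 0 :> nat) then (if j == 1%N then true else x i)
     else if (k == n :> nat) then (if j == n then false else x i)
     else if occ x k && ~~ occ x k.+1 then
       (if j == k :> nat then false else if j == k.+1 then true else x i)
     else x i].

Definition jump_list (n : nat) (d : measure_display) (Omega : measurableType d)
    (pts : 'I_n.+1 -> Omega -> set R) (t0 t : R) (w : Omega)
    (s : seq (R * 'I_n.+1)) : Prop :=
  sorted (fun p q : R * 'I_n.+1 => p.1 < q.1) s /\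
  forall (u : R) (k : 'I_n.+1), (pts k w u /\ t0 <= u < t) <-> (u, k) \in s.

Definition nrds (n : nat) (d : measure_display) (Omega : measurableType d)
    (pts : 'I_n.+1 -> Omega -> set R) (t t0 : R) (x : state n) (w : Omega)
    (y : state n) : Prop :=
  exists s, jump_list pts t0 t w s /\ foldl (@jump n) x (map snd s) = y.

(** Gamma(t,t0): phi(t,t0,.,w) is a constant map on X
    (phi is defined whenever the jumps in [t0,t) are finite and distinct,
    which holds almost surely). *)
Definition Gamma (n : nat) (d : measure_display) (Omega : measurableType d)
    (pts : 'I_n.+1 -> Omega -> set R) (t t0 : R) : set Omega :=
  [set w | exists s, jump_list pts t0 t w s /\
     forall x1 x2 : state n,
       foldl (@jump n) x1 (map snd s) = foldl (@jump n) x2 (map snd s)].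

End TASEP.

From HB Require Import structures.
From mathcomp Require Import all_boot all_order all_algebra.
From mathcomp Require Import all_classical all_reals all_analysis.
From mathcomp Require Import zify.
Import Order.TTheory GRing.Theory Num.Theory.
Local Open Scope classical_set_scope.
Local Open Scope ring_scope.
Set Implicit Arguments. Unset Strict Implicit.

(* The word W of jump sites made of the sweeps (n), (n-1, n), ..., (1, ..., n),
   of total length n(n+1)/2, sends every configuration to the empty one: the
   sweep starting at site lo pushes the only particle possibly left in
   sites lo..n out through site n.  Split [t0,t) into the m = n(n+1)/2 cells
   of the bounded-rates partition and require, in cell j, exactly one point
   of the process at site W_j and none of the others.  On that event the
   jumps in [t0,t) are exactly W, so phi(t,t0,.) is constant; by
   independence its probability is a product of m(n+1) Poisson masses with
   means in [r,R], each at least exp(-R) min(1,r). *)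

Section Synchronization.
Variable n : nat.
Implicit Type x : state n.

Lemma occE x (i : 'I_n) : occ x i.+1 = x i.
Proof.
apply/existsP/idP => [[j /andP[/eqP/succn_inj/val_inj -> //]]|xi].
by exists i; rewrite eqxx xi.
Qed.

(* Sites [lo..n] are empty except possibly site [k]; for [k = 0], which names
   no site, they are all empty. *)
Definition vacant_except x (lo k : nat) : Prop :=
  forall i : 'I_n, (lo <= i.+1)%N -> i.+1 <> k -> x i = false.

Lemma jump_vacant_except x (lo k : nat) :
  (0 < lo <= k)%N -> (k < n)%N -> vacant_except x lo k ->
  vacant_except (jump x (inord k)) lo k.+1.
Proof.
move=> /andP[lo_gt0 lo_le_k] k_lt_n vx i lo_le_i i_neq_k1.
have k1_empty : occ x k.+1 = false.
  by rewrite (occE x (Ordinal k_lt_n)); apply: vx => /=; lia.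
rewrite ffunE inordK; last lia.
have -> : (k == 0%N) = false by apply/eqP; lia.
have -> : (k == n) = false by apply/eqP; lia.
rewrite /= k1_empty andbT; case: (eqVneq i.+1 k) => [i_eq_k | i_neq_k].
- by case: ifP; rewrite -?occE ?i_eq_k.
- have -> : (i.+1 == k.+1) = false by apply/eqP.
  by case: ifP => _; apply: vx => //; apply/eqP.
Qed.

Lemma jump_exit_vacant x (lo : nat) :
  vacant_except x lo n -> vacant_except (jump x (inord n)) lo 0.
Proof.
move=> vx i lo_le_i _; rewrite ffunE inordK // eqxx /=.
have -> : (n == 0%N) = false by apply/eqP; have := ltn_ord i; lia.
by case: eqP => // i_neq_n; apply: vx.
Qed.

Definition sweep (lo : nat) : seq 'I_n.+1 := map (@inord n) (iota lo (n.+1 - lo)).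

Lemma foldl_jump_sweep x (lo k : nat) :
  (0 < lo <= k)%N -> (k <= n)%N -> vacant_except x lo k ->
  vacant_except (foldl (@jump n) x (sweep k)) lo 0.
Proof.
move=> lo_k k_le_n; move c_def: (n - k)%N => c.
elim: c k x lo_k k_le_n c_def => [|c IH] k x lo_k k_le_n c_def vx.
- have k_eq_n : k = n by lia.
  by subst k; rewrite /sweep subSnn /=; apply: jump_exit_vacant.
- rewrite /sweep (_ : (n.+1 - k)%N = (n.+1 - k.+1).+1); last lia.
  apply: (IH k.+1); try lia.
  by apply: jump_vacant_except => //; lia.
Qed.

Fixpoint sync_word (J : nat) : seq 'I_n.+1 :=
  if J is J'.+1 then sync_word J' ++ sweep (n - J') else [::].

Lemma size_sync_word : size (sync_word n) = (n * n.+1 %/ 2)%N.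
Proof.
suff size_J J : (J <= n)%N -> size (sync_word J) = (J * J.+1 %/ 2)%N by exact: size_J.
elim: J => [//|J IH] J_le_n /=.
rewrite size_cat IH ?size_map ?size_iota; lia.
Qed.

Lemma foldl_jump_sync_word x : foldl (@jump n) x (sync_word n) = [ffun=> false].
Proof.
suff vacant_J J : (J <= n)%N -> vacant_except (foldl (@jump n) x (sync_word J)) (n - J).+1 0.
  by apply/ffunP => i; rewrite ffunE; apply: (vacant_J n) => //; lia.
elim: J => [|J IH] J_le_n /=; first by move=> i; have := ltn_ord i; lia.
rewrite foldl_cat; apply: foldl_jump_sweep; try lia.
by move=> i i_ge i_neq; apply: IH; lia.
Qed.

End Synchronization.

Lemma divn_grid (n j : nat) (k : 'I_n.+1) : ((j * n.+1 + k) %/ n.+1)%N = j.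
Proof. by rewrite divnMDl // divn_small ?addn0. Qed.

Lemma inord_modn_grid (n j : nat) (k : 'I_n.+1) : inord ((j * n.+1 + k) %% n.+1) = k.
Proof. by rewrite modnMDl modn_small // inord_val. Qed.

Lemma big_ord_mul_divmod (T : Type) (idx : T) (op : Monoid.law idx) (m n : nat)
    (G : nat -> 'I_n.+1 -> T) :
  \big[op/idx]_(i < m * n.+1) G (i %/ n.+1)%N (inord (i %% n.+1)) =
  \big[op/idx]_(j < m) \big[op/idx]_(k < n.+1) G j k.
Proof.
rewrite -(big_mkord xpredT (fun i => G (i %/ n.+1)%N (inord (i %% n.+1)))).
rewrite big_nat_mul big_mkord.
apply: eq_bigr => j _.
rewrite -[(j * n.+1)%N]add0n big_addn mulSn addnK big_mkord.
by apply: eq_bigr => k _; rewrite addnC divn_grid inord_modn_grid.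
Qed.

Section Cells.
Variable R : realType.
Implicit Types (q : nat -> R) (A : set R).

Lemma exists_cell q (m : nat) (v : R) :
  q 0%N <= v -> v < q m -> exists2 j, (j < m)%N & q j <= v < q j.+1.
Proof.
move=> q0_le; elim: m => [|m IH] v_lt; first by have := lt_le_trans v_lt q0_le; rewrite ltxx.
case: (ltP v (q m)) => [/IH [j j_lt v_cell] | qm_le]; last by exists m; rewrite ?qm_le.
by exists j => //; apply: ltnW.
Qed.

Lemma cell_le q (m : nat) : (forall j, (j < m)%N -> q j <= q j.+1) ->
  forall i j, (i <= j <= m)%N -> q i <= q j.
Proof.
move=> q_le i j /andP[i_le_j j_le_m].
apply: (@homo_leq_in _ [pred k | (k <= m)%N] q <=%R) => //=.
- exact: le_trans.
- by move=> a b _ b_le k /andP[_ k_lt]; apply: ltnW (leq_trans k_lt b_le).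
- by move=> k _; apply: q_le.
- exact: leq_trans j_le_m.
Qed.

Lemma cells_disjoint q (m i j : nat) : (forall j, (j < m)%N -> q j <= q j.+1) ->
  (i < j <= m)%N -> `[q i, q i.+1[ `&` `[q j, q j.+1[ = set0.
Proof.
move=> q_le /andP[i_lt_j j_le_m]; rewrite -subset0 => v [].
rewrite /= !in_itv /= => /andP[_ v_lt] /andP[v_ge _].
have qij : q i.+1 <= q j by apply: cell_le q_le _ _ _; rewrite i_lt_j.
by have := lt_le_trans v_lt (le_trans qij v_ge); rewrite ltxx.
Qed.

Lemma card_is0 A : card_is A 0 -> A = set0.
Proof. by move=> [[|? ?] [_ // _ As]]; apply/seteqP; split => x // /As. Qed.

Lemma card_is1 A : card_is A 1 -> exists u, A = [set u].
Proof.
move=> [s [_ size_s As]]; case: s size_s As => [|u [|//]] // _ As; exists u.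
by apply/seteqP; split => x /=; rewrite ?As inE => /eqP.
Qed.

Lemma poisson_mass_bool_ge (r Rb mu : R) (b : bool) :
  0 <= r -> r <= mu <= Rb -> expR (- Rb) * Num.min 1 r <= poisson_mass mu b.
Proof.
move=> r_ge0 /andP[r_le_mu mu_le_Rb].
have exp_le : expR (- Rb) <= expR (- mu) by rewrite ler_expR lerN2.
have min_le1 : Num.min 1 r <= 1 by rewrite ge_min lexx.
rewrite /poisson_mass; case: b => /=.
- rewrite expr1 (_ : (1`!)%:R = 1 :> R) ?divr1 //.
  by apply: ler_pM; rewrite ?expR_ge0 ?le_min ?ler01 ?r_ge0 // ge_min r_le_mu orbT.
- rewrite expr0 (_ : (0`!)%:R = 1 :> R) ?divr1 ?mulr1 //.
  by apply: le_trans exp_le; rewrite ler_piMr ?expR_ge0.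
Qed.

End Cells.

Section CellCounts.
Variables (R : realType) (n : nat) (d : measure_display) (Omega : measurableType d).
Variables (pts : 'I_n.+1 -> Omega -> set R) (q : nat -> R).

Definition cell_event (m : nat) (cnt : nat -> 'I_n.+1 -> nat) : set Omega :=
  [set w | forall j (k : 'I_n.+1), (j < m)%N ->
     card_is (pts k w `&` `[q j, q j.+1[) (cnt j k)].

Lemma cell_event_prob (lam : 'I_n.+1 -> R -> R) (P : probability Omega R)
    (m : nat) (cnt : nat -> 'I_n.+1 -> nat) :
  indep_poisson_processes lam P pts -> (forall j, (j < m)%N -> q j <= q j.+1) ->
  measurable (cell_event m cnt) /\
  P (cell_event m cnt) =
    (\prod_(j < m) \prod_(k < n.+1)
       poisson_mass (rate_int (lam k) (q j) (q j.+1)) (cnt j k))%:E.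
Proof.
move=> indepP q_le.
pose cell p := (inord (p %% n.+1) : 'I_n.+1, q (p %/ n.+1)%N, q (p %/ n.+1).+1).
pose F := mkseq cell (m * n.+1).
pose cntF := mkseq (fun p => cnt (p %/ n.+1)%N (inord (p %% n.+1))) (m * n.+1).
have size_F : size F = (m * n.+1)%N by rewrite size_mkseq.
have div_lt p : (p < size F)%N -> (p %/ n.+1 < m)%N by rewrite size_F ltn_divLR.
have nth_F p : (p < size F)%N -> nth (ord0, 0, 0) F p = cell p.
  by rewrite size_F => p_lt; rewrite nth_mkseq.
have [||| E_meas PE] := indepP F cntF.
- by rewrite !size_mkseq.
- by move=> p p_lt; rewrite nth_F //; apply/q_le/div_lt.
- move=> i j i_lt j_lt i_neq_j; rewrite !nth_F //= => /(congr1 (@nat_of_ord _)).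
  rewrite !inordK ?ltn_mod // => mod_eq.
  have div_neq : (i %/ n.+1)%N <> (j %/ n.+1)%N.
    by move=> div_eq; apply: i_neq_j; rewrite (divn_eq i n.+1) (divn_eq j n.+1) div_eq mod_eq.
  case: (ltngtP (i %/ n.+1) (j %/ n.+1)) => [lt_ij | lt_ji | //].
  + by apply: cells_disjoint q_le _; rewrite lt_ij ltnW ?div_lt.
  + by rewrite setIC; apply: cells_disjoint q_le _; rewrite lt_ji ltnW ?div_lt.
suff -> : cell_event m cnt = [set w | forall p, (p < size F)%N ->
    let: (k, a, b) := nth (ord0, 0, 0) F p in
    card_is (pts k w `&` `[a, b[) (nth 0%N cntF p)].
  split=> //; rewrite PE; congr (_%:E).
  move: (nth_F); rewrite size_F => nth_F'.
  rewrite -(big_ord_mul_divmod _ _ (fun j k => poisson_mass (rate_int (lam k) (q j) (q j.+1)) (cnt j k))).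
  by apply: eq_bigr => p _; rewrite nth_F' // nth_mkseq.
apply/seteqP; split => w cells_w.
- move=> p p_lt; rewrite nth_F //= nth_mkseq -?size_F //.
  by apply: cells_w; apply: div_lt.
- move=> j k j_lt; have p_lt : (j * n.+1 + k < size F)%N by rewrite size_F; have := ltn_ord k; nia.
  by have := cells_w _ p_lt; rewrite nth_F //= nth_mkseq -?size_F // divn_grid inord_modn_grid.
Qed.

Lemma jump_list_of_cells (W : seq 'I_n.+1) (w : Omega) :
  (forall j, (j < size W)%N -> q j < q j.+1) ->
  (forall j (k : 'I_n.+1), (j < size W)%N ->
     card_is (pts k w `&` `[q j, q j.+1[) (k == nth ord0 W j)) ->
  exists2 s, jump_list pts (q 0%N) (q (size W)) w s & map snd s = W.
Proof.
set m := size W => q_lt cells_w.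
have q_le a b : (a <= b <= m)%N -> q a <= q b by apply: cell_le => j /q_lt /ltW.
have cell_pt j : exists v : R, (j < m)%N ->
    pts (nth ord0 W j) w `&` `[q j, q j.+1[ = [set v].
  have [j_lt | _] := ltnP j m; last by exists 0.
  by have := cells_w j (nth ord0 W j) j_lt; rewrite eqxx => /card_is1 [v ->]; exists v.
have [u u_cell] := choice cell_pt.
have u_in j : (j < m)%N -> pts (nth ord0 W j) w (u j) /\ q j <= u j < q j.+1.
  by move=> j_lt; have : [set u j] (u j) by []; rewrite -u_cell // => -[? /[!in_itv]].
exists [seq (u j, nth ord0 W j) | j <- iota 0 m]; last first.
  by rewrite -map_comp; exact: mkseq_nth.
split.
- rewrite sorted_map.
  apply: (@sub_in_sorted _ (mem (iota 0 m)) ltn); last 2 first.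
  + by apply/allP.
  + exact: iota_ltn_sorted.
  move=> a b; rewrite !mem_iota /= => a_lt b_lt a_lt_b.
  have [_ /andP[_ ua_lt]] := u_in a a_lt; have [_ /andP[ub_ge _]] := u_in b b_lt.
  by apply: lt_le_trans ua_lt (le_trans (q_le _ _ _) ub_ge); rewrite a_lt_b ltnW.
- move=> v k; split.
  + case=> pv /andP[v_ge v_lt].
    have [j j_lt v_cell] := exists_cell v_ge v_lt.
    have v_in : (pts k w `&` `[q j, q j.+1[) v by split; rewrite // in_itv.
    have := cells_w j k j_lt; case: eqP => [k_eq | _]; last first.
      by move/card_is0 => cell0; move: v_in; rewrite cell0.
    move: v_in; rewrite k_eq u_cell // => -> _.
    by apply/mapP; exists j; rewrite ?mem_iota.
  + case/mapP => j; rewrite mem_iota => /andP[_ j_lt] [-> ->].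
    have [pu /andP[u_ge u_lt]] := u_in j j_lt; split => //.
    by rewrite (le_trans (q_le _ _ _) u_ge) ?(lt_le_trans u_lt (q_le _ _ _)) //; lia.
Qed.
End CellCounts.

Theorem lemma12 (R : realType) (r Rb : R) (n : nat) :
  0 < r -> r < Rb ->
  exists2 delta : R, 0 < delta &
    forall (lam : 'I_n.+1 -> R -> R)
           (d : measure_display) (Omega : measurableType d)
           (P : probability Omega R) (pts : 'I_n.+1 -> Omega -> set R)
           (t0 t : R),
      (forall k, admissible_rate (lam k)) ->
      indep_poisson_processes lam P pts ->
      joint_bounded lam r Rb (n * n.+1 %/ 2) t0 t ->
      exists2 A : set Omega, measurable A /\ A `<=` Gamma pts t t0 &
        (delta%:E <= P A)%E.
Proof.
move=> r_gt0 r_lt_Rb; set m := (n * n.+1 %/ 2)%N.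
set c := expR (- Rb) * Num.min 1 r.
have c_gt0 : 0 < c by rewrite mulr_gt0 ?expR_gt0 // lt_min ltr01 r_gt0.
exists (c ^+ (m * n.+1)); first exact: exprn_gt0.
move=> lam d Omega P pts t0 t _ indepP [q [<- <- q_lt q_bounds]].
pose W := sync_word n n.
pose cnt j (k : 'I_n.+1) : nat := k == nth ord0 W j.
have [E_meas PE] := cell_event_prob cnt indepP (fun j j_lt => ltW (q_lt j j_lt)).
exists (cell_event pts q m cnt); first split=> // w cells_w.
- have size_W : size W = m by rewrite size_sync_word.
  have [s jl_s s_W] : exists2 s, jump_list pts (q 0%N) (q m) w s & map snd s = W.
    by rewrite -size_W; apply: jump_list_of_cells; rewrite size_W.
  by exists s; split=> // x1 x2; rewrite s_W !foldl_jump_sync_word.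
- rewrite PE lee_fin.
  have -> : c ^+ (m * n.+1) = \prod_(j < m) \prod_(k < n.+1) c.
    by rewrite prodr_const card_ord prodr_const card_ord -exprM mulnC.
  apply: ler_prod => j _; rewrite prodr_ge0 => [|k _]; last exact: ltW.
  apply: ler_prod => k _; rewrite (ltW c_gt0).
  by apply: poisson_mass_bool_ge; [exact: ltW | exact: q_bounds].
Qed.
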